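(* Define the pre-sum $A\boxplus B$ of two triangles $A=A_1A_2A_3$, $B=B_1B_2B_3$ in the real projective plane as follows. If $A$ and $B$ are perspective from a point $S$ (the lines $A_iB_i$ all pass through $S$), then $A\boxplus B=C_1C_2C_3$ where, for every permutation $(i,j,k)$ of $(1,2,3)$, $P_{ij}=A_iA_k\cap B_jB_k$ and $C_k=P_{ik}P_{ki}\cap P_{jk}P_{kj}$. If $A$ and $B$ are perspective from a line $s$ (the points $A_kA_j\cap B_kB_j$ all lie on $s$), then $A\boxplus B=C_1C_2C_3$ with $C_k=A_iB_j\cap A_jB_i$ for every permutation $(i,j,k)$. Then, whenever the constructions involved are well defined (general position): (1) $A\boxplus B=B\boxplus A$; (2) if $A\boxplus B=C$, then $A\boxplus C=B$ and $B\boxplus C=A$. *)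

(* Real projective plane in homogeneous coordinates:
   points and lines are nonzero row vectors of R^3 (R : realType), taken up
   to a nonzero scalar. *)
From HB Require Import structures.
From mathcomp Require Import all_boot all_order all_algebra.
From mathcomp Require Import all_classical all_reals.
Set Implicit Arguments. Unset Strict Implicit. Unset Printing Implicit Defensive.
Import Order.TTheory GRing.Theory Num.Theory.
Local Open Scope ring_scope.

Section Proj.
Variable R : realType.

Definition vec3 := 'rV[R]_3.

Definition cross (u v : vec3) : vec3 :=
  \row_(k < 3) (u 0 (ordS k) * v 0 (ordS (ordS k))
                - u 0 (ordS (ordS k)) * v 0 (ordS k)).

Definition dot (u v : vec3) : R := \sum_(i < 3) u 0 i * v 0 i.

(* line through two points / intersection point of two lines;
   the result is 0 exactly when the two arguments do not determine a
   unique line / point (coincident or undefined inputs). *)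
Definition join (P Q : vec3) : vec3 := cross P Q.
Definition meet (l m : vec3) : vec3 := cross l m.

Definition incident (P l : vec3) : Prop := dot P l = 0.

Definition proj_eq (u v : vec3) : Prop := u != 0 /\ v != 0 /\ cross u v = 0.

Definition triangle := 'I_3 -> vec3.

Definition is_triangle (A : triangle) : Prop := \det (\matrix_(i < 3) A i) != 0.

Definition distinct3 (i j k : 'I_3) : Prop := [/\ i != j, j != k & i != k].

Definition persp_point (A B : triangle) : Prop :=
  exists S : vec3, S != 0 /\
    forall i, join (A i) (B i) != 0 /\ incident S (join (A i) (B i)).

Definition persp_line (A B : triangle) : Prop :=
  exists s : vec3, s != 0 /\
    forall j k, j != k ->
      meet (join (A k) (A j)) (join (B k) (B j)) != 0 /\
      incident (meet (join (A k) (A j)) (join (B k) (B j))) s.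

Definition Ppt (A B : triangle) (a b c : 'I_3) : vec3 :=
  meet (join (A a) (A c)) (join (B b) (B c)).

(* case "perspective from a point", for the permutation (i,j,k):
   C_k = P_{ik}P_{ki} /\ P_{jk}P_{kj} *)
Definition constr_point (A B : triangle) (i j k : 'I_3) : vec3 :=
  meet (join (Ppt A B i k j) (Ppt A B k i j))
       (join (Ppt A B j k i) (Ppt A B k j i)).

Definition constr_line (A B : triangle) (i j k : 'I_3) : vec3 :=
  meet (join (A i) (B j)) (join (A j) (B i)).

(* Since cross u 0 = cross 0 u = 0, the final vector being
   nonzero forces every intermediate join/meet to be well defined. *)
Definition presum_point (A B C : triangle) : Prop :=
  [/\ is_triangle A, is_triangle B, persp_point A B &
      forall i j k, distinct3 i j k -> proj_eq (C k) (constr_point A B i j k)].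

Definition presum_line (A B C : triangle) : Prop :=
  [/\ is_triangle A, is_triangle B, persp_line A B &
      forall i j k, distinct3 i j k -> proj_eq (C k) (constr_line A B i j k)].

End Proj.

(* Joins and meets are both cross products, and up to scalars the cross
   product obeys two incidence identities: two lines through a common point
   meet in that point, and joining a point a with a point of a line through a
   gives back that line.  Chasing these identities through the constructions
   shows that the vertices of A and of C = A [+] B rebuild the vertices of B,
   whence A [+] C = B; exchanging A and B only changes signs, whence
   commutativity.  Working with "is a scalar multiple of", which tolerates
   zero vectors, keeps the computation free of side conditions; the
   well-definedness hypotheses are only needed at the very end. *)
From HB Require Import structures.
From mathcomp Require Import all_boot all_order all_algebra.
From mathcomp Require Import all_classical all_reals.
From mathcomp Require Import ring.
Import Order.TTheory GRing.Theory Num.Theory.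
Local Open Scope ring_scope.

Section ProjectivePlane.
Variable R : realType.
Implicit Types (u v w a b p q r l : vec3 R) (A B C : triangle R).

Lemma ord3P (l : 'I_3) : [\/ l = 0, l = 1 | l = 2].
Proof.
by case: l => [[|[|[|//]]] lt]; [apply: Or31 | apply: Or32 | apply: Or33];
  apply: val_inj.
Qed.

Lemma row3_eq u v : u 0 0 = v 0 0 -> u 0 1 = v 0 1 -> u 0 2 = v 0 2 -> u = v.
Proof. by move=> e0 e1 e2; apply/rowP => l; case: (ord3P l) => ->. Qed.

Lemma dotE u v : dot u v = u 0 0 * v 0 0 + u 0 1 * v 0 1 + u 0 2 * v 0 2.
Proof.
rewrite /dot !big_ord_recr big_ord0 /= add0r.
by congr (_ * _ + _ * _ + _ * _); congr (_ _ _); apply: val_inj.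
Qed.

Lemma ordS3_0 : ordS (0 : 'I_3) = 1. Proof. exact: val_inj. Qed.
Lemma ordS3_1 : ordS (1 : 'I_3) = 2. Proof. exact: val_inj. Qed.
Lemma ordS3_2 : ordS (2 : 'I_3) = 0. Proof. exact: val_inj. Qed.

Local Ltac cross_ring :=
  apply: row3_eq; rewrite ?dotE !mxE ?(ordS3_0, ordS3_1, ordS3_2); ring.

Lemma crossC u v : cross v u = - cross u v.
Proof. cross_ring. Qed.

Lemma crossZl (c : R) u v : cross (c *: u) v = c *: cross u v.
Proof. cross_ring. Qed.

Lemma crossZr (c : R) u v : cross u (c *: v) = c *: cross u v.
Proof. cross_ring. Qed.

Lemma cross_crossr u v w : cross u (cross v w) = dot u w *: v - dot u v *: w.
Proof. cross_ring. Qed.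

Lemma cross_cross_common p q l : cross (cross p l) (cross q l) = dot p (cross q l) *: l.
Proof. cross_ring. Qed.

Lemma cross_cross_absorb a b r : cross a (cross r (cross a b)) = - dot a r *: cross a b.
Proof. cross_ring. Qed.

Lemma crossv0 u : cross u 0 = 0.
Proof. cross_ring. Qed.

Lemma crossNl u v : cross (- u) v = - cross u v.
Proof. cross_ring. Qed.

Lemma crossNr u v : cross u (- v) = - cross u v.
Proof. cross_ring. Qed.

Lemma crossNN u v : cross (- u) (- v) = cross u v.
Proof. by rewrite crossNl crossNr opprK. Qed.

Lemma crossvv u : cross u u = 0.
Proof. cross_ring. Qed.

Lemma dotNl u v : dot (- u) v = - dot u v.
Proof. by rewrite !dotE !mxE; ring. Qed.

Lemma dotNr u v : dot u (- v) = - dot u v.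
Proof. by rewrite !dotE !mxE; ring. Qed.

Lemma dot_self_eq0 u : dot u u = 0 -> u = 0.
Proof.
rewrite dotE -!expr2 => /eqP.
rewrite paddr_eq0 ?addr_ge0 ?sqr_ge0 // paddr_eq0 ?sqr_ge0 //.
rewrite !sqrf_eq0 => /andP[/andP[/eqP e0 /eqP e1] /eqP e2].
by apply: row3_eq; rewrite mxE.
Qed.

Definition multiple u v := exists c : R, u = c *: v.

Lemma multiple_refl u : multiple u u.
Proof. by exists 1; rewrite scale1r. Qed.

Lemma multiple_trans {u v w} : multiple u v -> multiple v w -> multiple u w.
Proof. by move=> [a ->] [b ->]; exists (a * b); rewrite scalerA. Qed.

Lemma multiple_scale (c : R) u : multiple (c *: u) u.
Proof. by exists c. Qed.

Lemma multiple_opp u : multiple (- u) u.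
Proof. by exists (-1); rewrite scaleN1r. Qed.

Lemma multiple_neq0 {u v} : multiple u v -> u != 0 -> v != 0.
Proof. by move=> [c ->]; apply: contraNneq => ->; rewrite scaler0. Qed.

Lemma multiple_cross {u u' v v'} :
  multiple u u' -> multiple v v' -> multiple (cross u v) (cross u' v').
Proof. by move=> [a ->] [b ->]; exists (a * b); rewrite crossZl crossZr scalerA. Qed.

Lemma multiple_crossC u v : multiple (cross u v) (cross v u).
Proof. by rewrite (crossC v); apply: multiple_opp. Qed.

Lemma multiple_cross_common {p q l l'} :
  multiple l' l -> multiple (cross (cross p l) (cross q l')) l.
Proof.
by move=> [c ->]; rewrite !crossZr cross_cross_common scalerA; apply: multiple_scale.
Qed.

Lemma multiple_cross_absorb {a a' b r} :
  multiple a' a -> multiple (cross a (cross r (cross a' b))) (cross a' b).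
Proof.
move=> [c ->]; exists (- dot a r).
by rewrite crossZl !crossZr cross_cross_absorb !scalerA mulrC.
Qed.

Lemma multiple_cross_eq0 u v : cross u v = 0 -> v != 0 -> multiple u v.
Proof.
move=> uv0 v0; have vv0 : dot v v != 0 by apply: contra_neq v0; apply: dot_self_eq0.
exists (dot v u / dot v v); apply: (scalerI vv0).
have /eqP := cross_crossr v u v; rewrite uv0 crossv0 eq_sym subr_eq0 => /eqP ->.
by rewrite scalerA mulrC divfK.
Qed.

Lemma proj_eqC u v : proj_eq u v -> proj_eq v u.
Proof. by case=> u0 [v0 uv0]; do 2!split=> //; rewrite crossC uv0 oppr0. Qed.

Lemma proj_eq_multiple {u v} : proj_eq u v -> multiple u v.
Proof. by case=> _ [v0 uv0]; apply: multiple_cross_eq0. Qed.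

Lemma multiple_proj_eq {u v} : u != 0 -> v != 0 -> multiple u v -> proj_eq u v.
Proof. by move=> u0 v0 [c uE]; do 2!split=> //; rewrite uE crossZl crossvv scaler0. Qed.

Lemma triangle_vertex_neq0 A k : is_triangle A -> A k != 0.
Proof.
apply: contraNneq => Ak0; rewrite /is_triangle (expand_det_row _ k).
by rewrite big1 // => j _; rewrite !mxE Ak0 mxE mul0r.
Qed.

Lemma distinct3_jik {i j k} : distinct3 i j k -> distinct3 j i k.
Proof. by case=> ij jk ik; split; rewrite // eq_sym. Qed.

Lemma distinct3_ikj {i j k} : distinct3 i j k -> distinct3 i k j.
Proof. by case=> ij jk ik; split; rewrite // eq_sym. Qed.

Section PreSum.
Variable persp : triangle R -> triangle R -> Prop.
Variable constr : triangle R -> triangle R -> 'I_3 -> 'I_3 -> 'I_3 -> vec3 R.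

(* [presum_point] and [presum_line] are convertible to instances of [presum]. *)
Definition presum A B C :=
  [/\ is_triangle A, is_triangle B, persp A B &
      forall i j k, distinct3 i j k -> proj_eq (C k) (constr A B i j k)].

Definition constr_cancel := forall A B C,
  (forall i j k, distinct3 i j k -> multiple (C k) (constr A B i j k)) ->
  forall i j k, distinct3 i j k -> multiple (constr A C i j k) (B k).

Hypothesis persp_sym : forall A B, persp A B -> persp B A.
Hypothesis constr_sym : forall A B i j k, multiple (constr B A i j k) (constr A B i j k).
Hypothesis constrK : constr_cancel.

Lemma presum_sym A B C : presum A B C -> presum B A C.
Proof.
case=> tA tB pAB hC; split=> // [|i j k d]; first exact: persp_sym.
have [Ck0 [c0 _]] := hC i j k d.
apply: multiple_proj_eq Ck0 (multiple_neq0 (constr_sym B A i j k) c0) _.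
exact: multiple_trans (proj_eq_multiple (hC i j k d)) (constr_sym B A i j k).
Qed.

Lemma presum_cancel A B C D : presum A B C -> presum A C D -> presum A C B.
Proof.
case=> tA tB _ hC [_ tC pAC hD]; split=> // i j k d.
have [_ [c0 _]] := hD i j k d; apply/proj_eqC/multiple_proj_eq => //.
  exact: triangle_vertex_neq0.
by apply: constrK d => i' j' k' d'; apply/proj_eq_multiple/hC.
Qed.

Lemma presum_props A B C : presum A B C ->
  [/\ presum B A C, (exists D, presum A C D) -> presum A C B &
      (exists D, presum B C D) -> presum B C A].
Proof.
move=> hABC; split; first exact: presum_sym.
  by case=> D; apply: presum_cancel.
by case=> D; apply/presum_cancel/presum_sym.
Qed.

End PreSum.

Lemma Ppt_sym A B i j k : Ppt B A i j k = - Ppt A B j i k.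
Proof. exact: crossC. Qed.

Lemma constr_point_sym A B i j k : constr_point B A i j k = constr_point A B i j k.
Proof.
rewrite /constr_point /meet /join !(Ppt_sym A B) !crossNN.
by rewrite (crossC (Ppt A B k i j)) (crossC (Ppt A B k j i)) crossNN.
Qed.

Lemma constr_line_sym A B i j k : constr_line B A i j k = - constr_line A B i j k.
Proof.
by rewrite /constr_line /meet /join (crossC (B i)) (crossC (B j)) crossNN crossC.
Qed.

Lemma persp_point_sym A B : persp_point A B -> persp_point B A.
Proof.
case=> S [S0 hS]; exists S; split=> // i; have [ABi0 SABi] := hS i.
by rewrite /join crossC oppr_eq0 /incident dotNr SABi oppr0.
Qed.

Lemma persp_line_sym A B : persp_line A B -> persp_line B A.
Proof.
case=> s [s0 hs]; exists s; split=> // j k jk; have [ABjk0 ABjks] := hs j k jk.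
by rewrite /meet crossC oppr_eq0 /incident dotNl ABjks oppr0.
Qed.

Section PointCase.
Variables A B C : triangle R.
Hypothesis C_multiple :
  forall i j k, distinct3 i j k -> multiple (C k) (constr_point A B i j k).

(* C_y and C_z both lie on the line P_yz P_zy. *)
Lemma join_C_multiple {x y z} : distinct3 x y z ->
  multiple (cross (C y) (C z)) (cross (Ppt A B y z x) (Ppt A B z y x)).
Proof.
move=> d; apply: multiple_trans
  (multiple_cross (C_multiple _ _ _ (distinct3_ikj d)) (C_multiple _ _ _ d)) _.
apply: multiple_trans (multiple_crossC _ _) _.
exact/multiple_cross_common/multiple_crossC.
Qed.

(* P_zy is on A_x A_z, hence it is where that line meets C_y C_z. *)
Lemma Ppt_AC_multiple {x y z} :
  distinct3 x y z -> multiple (Ppt A C x y z) (Ppt A B z y x).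
Proof.
move=> d; apply: multiple_trans (multiple_cross (multiple_refl _) (join_C_multiple d)) _.
exact/multiple_cross_absorb/multiple_crossC.
Qed.

(* P_zy and P_zx both lie on B_x B_y. *)
Lemma join_Ppt_AC_multiple {x y z} : distinct3 x y z ->
  multiple (cross (Ppt A C x y z) (Ppt A C y x z)) (cross (B x) (B y)).
Proof.
move=> d; apply: multiple_trans
  (multiple_cross (Ppt_AC_multiple d) (Ppt_AC_multiple (distinct3_jik d))) _.
apply: multiple_trans (multiple_cross_common (multiple_crossC _ _)) _.
exact: multiple_crossC.
Qed.

Lemma constr_point_AC_multiple i j k :
  distinct3 i j k -> multiple (constr_point A C i j k) (B k).
Proof.
move=> d; apply: multiple_trans (multiple_cross
  (join_Ppt_AC_multiple (distinct3_ikj d))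
  (join_Ppt_AC_multiple (distinct3_ikj (distinct3_jik d)))) _.
exact/multiple_cross_common/multiple_refl.
Qed.

End PointCase.

Lemma constr_line_AC_multiple A B C :
  (forall i j k, distinct3 i j k -> multiple (C k) (constr_line A B i j k)) ->
  forall i j k, distinct3 i j k -> multiple (constr_line A C i j k) (B k).
Proof.
move=> C_multiple i j k d.
(* C_j lies on A_i B_k and C_i lies on A_j B_k. *)
have AiCj : multiple (cross (A i) (C j)) (cross (A i) (B k)).
  apply: multiple_trans (multiple_cross (multiple_refl _)
    (C_multiple _ _ _ (distinct3_jik (distinct3_ikj d)))) _.
  exact/multiple_cross_absorb/multiple_refl.
have AjCi : multiple (cross (A j) (C i)) (cross (A j) (B k)).
  apply: multiple_trans (multiple_cross (multiple_refl _)
    (C_multiple _ _ _ (distinct3_ikj (distinct3_jik d)))) _.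
  apply: multiple_trans (multiple_cross (multiple_refl _) (multiple_crossC _ _)) _.
  exact/multiple_cross_absorb/multiple_refl.
apply: multiple_trans (multiple_cross AiCj AjCi) _.
exact/multiple_cross_common/multiple_refl.
Qed.

End ProjectivePlane.

Theorem lemma1 (R : realType) :
  (forall A B C : triangle R,
     presum_point A B C ->
     [/\ presum_point B A C,
         (exists D, presum_point A C D) -> presum_point A C B &
         (exists D, presum_point B C D) -> presum_point B C A]) /\
  (forall A B C : triangle R,
     presum_line A B C ->
     [/\ presum_line B A C,
         (exists D, presum_line A C D) -> presum_line A C B &
         (exists D, presum_line B C D) -> presum_line B C A]).
Proof.
split.
- apply: (@presum_props R (@persp_point R) (@constr_point R) (@persp_point_sym R) _
    (@constr_point_AC_multiple R)).
  by move=> A B i j k; rewrite constr_point_sym; apply: multiple_refl.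
- apply: (@presum_props R (@persp_line R) (@constr_line R) (@persp_line_sym R) _
    (@constr_line_AC_multiple R)).
  by move=> A B i j k; rewrite constr_line_sym; apply: multiple_opp.
Qed.
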